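(* Let $x$ be an allocation rule and suppose Assumptions D and X hold. (The following is part (ii) of the proposition; part (i) is attributed to prior work.) Suppose $\bar t$ is a win-lose dependent transfer rule (for $x$) such that for every $i$ and $\theta\in\Theta$, $$\bar U_i^{\min}(\theta)=\int_{\underline\theta}^{\theta}X_i^{\min}(z)\,dz,$$ where $\bar U_i^{\min}$ denotes the interim worst-case utility under $(x,\bar t)$. Then $(x,\bar t)$ is feasible.
   Context: Let $\Theta=[\underline\theta,\bar\theta]\subset\mathbb{R}$ with $0<\underline\theta<\bar\theta$, with Borel $\sigma$-algebra $\mathcal{B}$; ''$\sigma$-algebra'' always means a sub-$\sigma$-algebra of $\mathcal{B}$, and $\Delta(\Theta,\mathcal{A})$ is the set of probability measures on $(\Theta,\mathcal{A})$; $P_{\mathcal{E}}$ denotes the restriction of $P$ to $\mathcal{E}$. A divergence $D$ assigns to each pair $Q,P$ of probability measures on a common $\sigma$-algebra a number $D(Q\|P)\in[0,\infty]$. Assumption D: for every $\sigma$-algebra $\mathcal{A}$ and $P,Q\in\Delta(\Theta,\mathcal{A})$: (D1) $D(Q\|P)=0$ if $Q=P$; (D2) if $Q\ll P$ and $dQ/dP$ is bounded, $\epsilon\mapsto D(\epsilon Q+(1-\epsilon)P\|P)$ is continuous on $[0,1]$; (D3) $D(Q\|P)<\infty$ implies $Q\ll P$; (D4) $D(Q_{\mathcal{E}}\|P_{\mathcal{E}})\le D(Q\|P)$ for every sub-$\sigma$-algebra $\mathcal{E}\subset\mathcal{A}$; (D5) $D(Q_{\mathcal{E}}\|P_{\mathcal{E}})=D(Q\|P)$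 if $dQ_{\mathcal{E}}/dP_{\mathcal{E}}=dQ/dP$ $P$-a.e. Fix an atomless $P\in\Delta(\Theta,\mathcal{B})$ and $\eta>0$. Two bidders $i\in\{1,2\}$. An allocation rule is a bounded measurable $x=(x_1,x_2):\Theta^2\to\mathbb{R}^2$ with $x_1(\theta,\theta')\ge0$, $x_2(\theta',\theta)\ge0$, $x_1(\theta,\theta')+x_2(\theta',\theta)\le1$; a transfer rule is a bounded measurable $t=(t_1,t_2):\Theta^2\to\mathbb{R}^2$. Define $X_i(\theta)=\int x_i(\theta,\theta')dP(\theta')$, $X_i^{\min}(\theta)=\inf_Q\{\int x_i(\theta,\theta')dQ(\theta'):D(Q\|P)\le\eta\}$, and for a transfer rule $t$, $U_i^{\min}(\theta)=\inf_Q\{\int[\theta x_i(\theta,\theta')-t_i(\theta,\theta')]dQ(\theta'):D(Q\|P)\le\eta\}$, $Q$ ranging over $\Delta(\Theta,\mathcal{B})$. $(x,t)$ is incentive compatible if for all $i,\theta$, $\theta\in\arg\max_{\hat\theta\in\Theta}\inf_Q\{\int[\theta x_i(\hat\theta,\theta')-t_i(\hat\theta,\theta')]dQ(\theta'):D(Q\|P)\le\eta\}$; individually rational if $U_i^{\min}(\theta)\ge0$ for all $i,\theta$; feasible if both. Assumption X: (i) $x_i(\theta,\theta')\in\{0,1\}$ for $\theta'\ne\theta$; (ii) $X_i(\theta)=1$ implies $\theta=\bar\theta$; (iii) $X_i^{\min}$ is non-decreasing. A transfer rule $t$ is win-lose dependent if there exist $t_i^w,t_i^l:\Theta\to\mathbb{R}$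 with $t_i(\theta,\theta')=t_i^w(\theta)x_i(\theta,\theta')+t_i^l(\theta)[1-x_i(\theta,\theta')]$ and $\theta-t_i^w(\theta)\ge-t_i^l(\theta)$ for all $i,\theta,\theta'$. *)

From HB Require Import structures.
From mathcomp Require Import all_boot all_order all_algebra.
From mathcomp Require Import all_classical all_reals all_analysis.
Set Implicit Arguments. Unset Strict Implicit. Unset Printing Implicit Defensive.
Import Order.TTheory GRing.Theory Num.Theory.
Import numFieldNormedType.Exports.
Local Open Scope classical_set_scope.
Local Open Scope ring_scope.

Definition Theta (R : realType) (a b : R) (hab : a <= b) : Type :=
  {x : R | a <= x <= b}.

Section Model.
Variables (R : realType) (a b : R) (hab : a <= b).
Local Notation Theta := (Theta hab).
HB.instance Definition _ := Choice.on Theta.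
Definition theta_lo : Theta := exist _ a (andb_true_intro (conj (lexx a) hab)).
HB.instance Definition _ := isPointed.Build Theta theta_lo.

Definition BorelT : set (set Theta) :=
  [set (@sval R _) @^-1` B | B in [set B : set R | @measurable _ (measurableTypeR R) B]].

Definition ThetaB := g_sigma_algebraType BorelT.

Definition subsigma (A : set (set Theta)) :=
  sigma_algebra setT A /\ A `<=` BorelT.

Local Open Scope ereal_scope.

(* A probability measure on (Theta, A), represented by its set function
   (only its values on A are meaningful). *)
Definition isProbOn (A : set (set Theta)) (mu : set Theta -> \bar R) :=
  [/\ mu set0 = 0, (forall X, A X -> 0 <= mu X),
      semi_sigma_additive (mu : set (g_sigma_algebraType A) -> \bar R)
    & mu setT = 1].

Definition abs_cont (A : set (set Theta)) (Q P : set Theta -> \bar R) :=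
  forall X, A X -> P X = 0 -> Q X = 0.

Definition is_density (A : set (set Theta)) (Q P : set Theta -> \bar R)
    (f : Theta -> R) :=
  [/\ measurable_fun setT (f : g_sigma_algebraType A -> R),
      (forall y, (0 <= f y)%R)
    & forall X, A X ->
        Q X = @integral _ (g_sigma_algebraType A) R P X (fun y => (f y)%:E)].

Definition mixture (e : R) (Q P : set Theta -> \bar R) : set Theta -> \bar R :=
  fun X => e%:E * Q X + (1 - e)%R%:E * P X.

(* A divergence: D A Q P stands for D(Q || P) with Q, P on (Theta, A). *)
Definition divergence_wd (D : set (set Theta) -> (set Theta -> \bar R) ->
    (set Theta -> \bar R) -> \bar R) :=
  (forall A Q P, subsigma A -> isProbOn A Q -> isProbOn A P -> 0 <= D A Q P)
  /\ (forall A Q Q' P P', subsigma A -> isProbOn A Q -> isProbOn A P ->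
        isProbOn A Q' -> isProbOn A P' ->
        (forall X, A X -> Q X = Q' X) -> (forall X, A X -> P X = P' X) ->
        D A Q P = D A Q' P').

Definition assumptionD (D : set (set Theta) -> (set Theta -> \bar R) ->
    (set Theta -> \bar R) -> \bar R) :=
  [/\
      (forall A P, subsigma A -> isProbOn A P -> D A P P = 0),
      (forall A Q P, subsigma A -> isProbOn A Q -> isProbOn A P ->
        abs_cont A Q P ->
        (exists f c, is_density A Q P f /\ forall y, (f y <= c)%R) ->
        {within `[0%R, 1%R], continuous (fun e : R => D A (mixture e Q P) P)}),
      (forall A Q P, subsigma A -> isProbOn A Q -> isProbOn A P ->
        D A Q P < +oo -> abs_cont A Q P),
      (forall A E Q P, subsigma A -> subsigma E -> E `<=` A ->
        isProbOn A Q -> isProbOn A P -> D E Q P <= D A Q P)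
    &
      (forall A E Q P, subsigma A -> subsigma E -> E `<=` A ->
        isProbOn A Q -> isProbOn A P ->
        (exists fA fE, [/\ is_density A Q P fA, is_density E Q P fE &
           exists N, [/\ A N, P N = 0 & forall y, ~ N y -> fA y = fE y]]) ->
        D E Q P = D A Q P)].

Definition atomless (P : set Theta -> \bar R) :=
  forall X, BorelT X -> 0 < P X ->
    exists Y, [/\ BorelT Y, Y `<=` X, 0 < P Y & P Y < P X].

(* Bidders are indexed by 'I_2; x i th th' is bidder i's allocation when
   bidder i reports th and the other bidder reports th'. *)
Definition bounded_measurable (f : 'I_2 -> Theta -> Theta -> R) :=
  (exists M : R, forall i th th', (`|f i th th'| <= M)%R) /\
  forall i, measurable_fun setT
    (fun p : ThetaB * ThetaB => f i p.1 p.2).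

Definition allocation_rule (x : 'I_2 -> Theta -> Theta -> R) :=
  bounded_measurable x /\
  forall th th', [/\ (0 <= x ord0 th th')%R, (0 <= x (lift ord0 ord0) th' th)%R
     & (x ord0 th th' + x (lift ord0 ord0) th' th <= 1)%R].

Definition transfer_rule (t : 'I_2 -> Theta -> Theta -> R) :=
  bounded_measurable t.

Section Mechanism.
Variables (D : set (set Theta) -> (set Theta -> \bar R) ->
    (set Theta -> \bar R) -> \bar R) (P : set Theta -> \bar R) (eta : R).

Definition EQ (Q : set Theta -> \bar R) (f : Theta -> R) : \bar R :=
  @integral _ ThetaB R Q setT (fun y => (f y)%:E).

Definition ambiguity : set (set Theta -> \bar R) :=
  [set Q | isProbOn BorelT Q /\ D BorelT Q P <= eta%:E].

Definition worst (f : Theta -> R) : \bar R :=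
  ereal_inf [set EQ Q f | Q in ambiguity].

Variables (x t : 'I_2 -> Theta -> Theta -> R).

Definition Xint (i : 'I_2) (th : Theta) : \bar R := EQ P (x i th).
Definition Xmin (i : 'I_2) (th : Theta) : \bar R := worst (x i th).

Definition Uhat (i : 'I_2) (th thh : Theta) : \bar R :=
  worst (fun th' => sval th * x i thh th' - t i thh th')%R.
Definition Umin (i : 'I_2) (th : Theta) : \bar R := Uhat i th th.

Definition incentive_compatible :=
  forall i th thh, Uhat i th thh <= Uhat i th th.
Definition individually_rational :=
  forall i th, 0 <= Umin i th.
Definition feasible := incentive_compatible /\ individually_rational.

Definition assumptionX :=
  [/\ (forall i th th', th' <> th -> x i th th' = 0%R \/ x i th th' = 1%R),
      (forall i th, Xint i th = 1 -> sval th = b)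
    & (forall i, {homo Xmin i : th th' / (sval th <= sval th')%R >-> th <= th'})].

Definition win_lose_dependent :=
  exists tw tl : 'I_2 -> Theta -> R,
    (forall i th th', t i th th' =
        (tw i th * x i th th' + tl i th * (1 - x i th th'))%R) /\
    (forall i th, (sval th - tw i th >= - tl i th)%R).

End Mechanism.
End Model.

(* Write the transfer as t = t^w x + t^l (1 - x).  The payoff of type th
   reporting thh is then (th - t^w(thh) + t^l(thh)) E_Q[x] - t^l(thh), an
   affine function of E_Q[x], so its infimum over the ambiguity set is at most
   its value at E_Q[x] = X^min(thh); for the truthful report the slope is
   nonnegative by win-lose dependence, so there the infimum is attained
   exactly.  Hence U^(th, thh) <= U^min(thh) + (th - thh) X^min(thh).  Since
   X^min is nondecreasing, U^min(th) = int_a^th X^min is convex with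
   subgradient X^min(thh) at thh, which bounds the right-hand side by
   U^min(th): incentive compatibility.  Individual rationality is the
   nonnegativity of that integral. *)

From HB Require Import structures.
From mathcomp Require Import all_boot all_order all_algebra.
From mathcomp Require Import all_classical all_reals all_analysis.
From mathcomp Require Import lra ring measurable_realfun.
Set Implicit Arguments. Unset Strict Implicit. Unset Printing Implicit Defensive.
Import Order.TTheory GRing.Theory Num.Theory.
Import numFieldNormedType.Exports.
Local Open Scope classical_set_scope.
Local Open Scope ring_scope.
Import HBNNSimple.

Section BorelTheta.
Variables (R : realType) (a b : R) (hab : a <= b).
Local Notation BorelT := (@BorelT _ _ _ hab).

Lemma sigma_algebra_BorelT : sigma_algebra setT BorelT.
Proof.
have := sigma_algebra_preimage setT (@sval R (fun x => a <= x <= b))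
  (sigma_algebra_measurable (measurableTypeR R)).
congr sigma_algebra.
by apply/seteqP; split => _ [B mB <-]; exists B => //; rewrite setTI.
Qed.

Lemma measurable_ThetaBE (X : set (ThetaB hab)) : measurable X = BorelT X.
Proof. by rewrite measurable_g_measurableTypeE //; exact: sigma_algebra_BorelT. Qed.

Lemma integral_eq_on_measurable (m1 m2 : set (ThetaB hab) -> \bar R) A f :
  (forall X, measurable X -> m1 X = m2 X) ->
  @integral _ (ThetaB hab) R m1 A f = @integral _ (ThetaB hab) R m2 A f.
Proof.
move=> m12; rewrite /integral; congr (_ - _)%E; congr ereal_sup;
  apply/seteqP; split => _ [h hf <-]; exists h => //;
  rewrite /sintegral; apply: eq_fsbigr => r _; rewrite m12 //.
all: exact: measurable_funPTI.
Qed.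

Variables (Q : set (Theta hab) -> \bar R) (hQ : isProbOn BorelT Q).

(* [isProbOn] only constrains [Q] on Borel sets; zeroing it elsewhere yields a
   genuine measure on [ThetaB]. *)
Definition prob_measure (X : set (ThetaB hab)) : \bar R :=
  if pselect (BorelT X) then Q X else 0%E.

Lemma prob_measureE X : measurable X -> prob_measure X = Q X.
Proof. by rewrite measurable_ThetaBE /prob_measure; case: pselect. Qed.

Let prob_measure0 : prob_measure set0 = 0%E.
Proof. by rewrite /= prob_measureE //; case: hQ. Qed.

Let prob_measure_ge0 X : (0 <= prob_measure X)%E.
Proof.
by rewrite /prob_measure; case: pselect => // hX; case: hQ => _ + _ _; apply.
Qed.

Let prob_measure_semi_sigma_additive : semi_sigma_additive prob_measure.
Proof.
move=> F mF tF mU.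
rewrite (_ : (fun n => \sum_(0 <= i < n) prob_measure (F i))%E =
             (fun n => \sum_(0 <= i < n) Q (F i))%E).
  by rewrite prob_measureE //; case: hQ => _ _ + _; exact.
by apply: funext => n; apply: eq_bigr => i _; rewrite prob_measureE.
Qed.

HB.instance Definition _ := isMeasure.Build _ _ _ prob_measure
  prob_measure0 prob_measure_ge0 prob_measure_semi_sigma_additive.

Lemma prob_measureT :
  (prob_measure : {measure set (ThetaB hab) -> \bar R}) setT = 1%E.
Proof. by rewrite /= prob_measureE //; case: hQ. Qed.

Lemma EQ_prob_measure f : EQ Q f = (\int[prob_measure]_(y in setT) (f y)%:E)%E.
Proof. by apply: integral_eq_on_measurable => X mX; rewrite prob_measureE. Qed.

Lemma EQ_ge0 f : (forall y, 0 <= f y) -> (0 <= EQ Q f)%E.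
Proof.
by move=> f0; rewrite EQ_prob_measure; apply: integral_ge0 => y _; rewrite lee_fin.
Qed.

Lemma prob_measure_integrable (f : Theta hab -> R) M :
  measurable_fun setT (f : ThetaB hab -> R) -> (forall y, `|f y| <= M) ->
  prob_measure.-integrable setT (EFin \o f).
Proof.
move=> mf f_bounded.
apply: measurable_bounded_integrable => //; first by rewrite prob_measureT ltry.
exists M; split; first exact: num_real.
by move=> M' hM' y _; apply: le_trans (f_bounded y) (ltW hM').
Qed.

Variables (f : Theta hab -> R) (M : R).
Hypotheses (mf : measurable_fun setT (f : ThetaB hab -> R))
  (f_bounded : forall y, `|f y| <= M).

Let f_integrable := prob_measure_integrable mf f_bounded.

Lemma EQ_fin_num : EQ Q f \is a fin_num.
Proof. by rewrite EQ_prob_measure; exact: integrable_fin_num f_integrable. Qed.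

Lemma EQ_affine k c : EQ Q (fun y => k * f y + c) = (k * fine (EQ Q f) + c)%:E.
Proof.
have c_integrable : prob_measure.-integrable setT (EFin \o cst c).
  exact: (@prob_measure_integrable _ `|c|).
rewrite EQ_prob_measure.
under eq_integral do rewrite EFinD EFinM.
rewrite integralD //; last exact: integrableZl.
rewrite integralZl // integral_cst // prob_measureT mule1 EFinD EFinM.
by rewrite -EQ_prob_measure fineK // EQ_fin_num.
Qed.

End BorelTheta.

Section InfAffine.
Variables (R : realType) (I : Type) (S : set I) (r : I -> R) (m : R).
Hypothesis inf_r : ereal_inf [set (r i)%:E | i in S] = m%:E.

Lemma ereal_inf_affine_le k c :
  (ereal_inf [set (k * r i + c)%:E | i in S] <= (k * m + c)%:E)%E.
Proof.
apply/lee_addgt0Pr => e e0.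
have k1_gt0 : 0 < `|k| + 1 by rewrite ltr_wpDl.
pose e' := e / (`|k| + 1).
have e'_gt0 : 0 < e' by rewrite divr_gt0.
have e'k : e' * (`|k| + 1) = e by rewrite divfK // gt_eqF.
have /ereal_inf_lt[_ [i Si <-]] : (ereal_inf [set (r i)%:E | i in S] < (m + e')%:E)%E.
  by rewrite inf_r lte_fin ltrDl.
rewrite lte_fin => ri_lt.
have m_le_ri : m <= r i by rewrite -lee_fin -inf_r; apply: ereal_inf_lbound; exists i.
apply: le_trans (ereal_inf_lbound _) _; first by exists i.
rewrite -EFinD lee_fin.
by case: (leP 0 k) => k0; [move: e'k; rewrite ger0_norm // | ]; nra.
Qed.

Lemma ereal_inf_affine k c : 0 <= k ->
  ereal_inf [set (k * r i + c)%:E | i in S] = (k * m + c)%:E.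
Proof.
move=> k0; apply/eqP; rewrite eq_le ereal_inf_affine_le /=.
apply/ereal_infP => _ [i Si <-]; rewrite lee_fin lerD2r ler_wpM2l //.
by rewrite -lee_fin -inf_r; apply: ereal_inf_lbound; exists i.
Qed.
End InfAffine.

Section WorstCase.
Variables (R : realType) (a b : R) (hab : a <= b)
  (D : set (set (Theta hab)) -> (set (Theta hab) -> \bar R) ->
       (set (Theta hab) -> \bar R) -> \bar R)
  (P : set (Theta hab) -> \bar R) (eta : R).
Local Notation worst := (worst D P eta).
Local Notation ambiguity := (ambiguity D P eta).

Lemma worst_ge0 f : (forall y, 0 <= f y) -> (0 <= worst f)%E.
Proof. by move=> f0; apply/ereal_infP => _ [Q [hQ _] <-]; exact: EQ_ge0. Qed.

Variables (f : Theta hab -> R) (M : R).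
Hypotheses (mf : measurable_fun setT (f : ThetaB hab -> R))
  (f_bounded : forall y, `|f y| <= M).

Lemma worst_fin_num : ambiguity !=set0 -> (forall y, 0 <= f y) ->
  worst f \is a fin_num.
Proof.
move=> [Q0 hQ0] f0; rewrite ge0_fin_numE ?worst_ge0 //.
apply: le_lt_trans (ereal_inf_lbound _) _; first by exists Q0.
by case/fin_numPlt/andP: (EQ_fin_num hQ0.1 mf f_bounded).
Qed.

Lemma worstE k c : worst (fun y => k * f y + c) =
  ereal_inf [set (k * fine (EQ Q f) + c)%:E | Q in ambiguity].
Proof. by congr ereal_inf; apply: eq_imagel => Q [hQ _]; exact: EQ_affine. Qed.

Variable m : R.
Hypothesis worst_f : worst f = m%:E.

Let inf_fine_EQ : ereal_inf [set (fine (EQ Q f))%:E | Q in ambiguity] = m%:E.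
Proof.
rewrite -worst_f; congr ereal_inf; apply: eq_imagel => Q [hQ _].
by rewrite fineK // (EQ_fin_num hQ mf f_bounded).
Qed.

Lemma worst_affine_le k c : (worst (fun y => k * f y + c)%R <= (k * m + c)%:E)%E.
Proof. by rewrite worstE; exact: ereal_inf_affine_le. Qed.

Lemma worst_affine k c : 0 <= k -> worst (fun y => k * f y + c) = (k * m + c)%:E.
Proof. by rewrite worstE; exact: ereal_inf_affine. Qed.
End WorstCase.

Section WinLoseDeviation.
Variables (R : realType) (a b : R) (hab : a <= b)
  (D : set (set (Theta hab)) -> (set (Theta hab) -> \bar R) ->
       (set (Theta hab) -> \bar R) -> \bar R)
  (P : set (Theta hab) -> \bar R) (eta : R)
  (x t : 'I_2 -> Theta hab -> Theta hab -> R) (tw tl : 'I_2 -> Theta hab -> R).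
Hypotheses (tE : forall i th th',
    t i th th' = tw i th * x i th th' + tl i th * (1 - x i th th'))
  (tw_tl : forall i th, - tl i th <= sval th - tw i th).

Lemma Uhat_affine i th thh : Uhat D P eta x t i th thh =
  worst D P eta (fun y => (sval th - tw i thh + tl i thh) * x i thh y + - tl i thh).
Proof. by congr worst; apply: funext => y; rewrite tE; ring. Qed.

(* The slope [sval th - tw i thh + tl i thh] may be negative for a misreport,
   so only the upper bound on the infimum is available there. *)
Lemma Uhat_le_Umin_tangent i th thh M m :
  measurable_fun setT (x i thh : ThetaB hab -> R) ->
  (forall y, `|x i thh y| <= M) -> Xmin D P eta x i thh = m%:E ->
  (Uhat D P eta x t i th thh <=
   Umin D P eta x t i thh + ((sval th - sval thh) * m)%:E)%E.
Proof.
move=> mx x_bounded Xmin_m; rewrite /Umin (Uhat_affine i thh).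
rewrite (worst_affine mx x_bounded Xmin_m); last by have := tw_tl i thh; lra.
rewrite Uhat_affine; apply: le_trans (worst_affine_le mx x_bounded Xmin_m _ _) _.
by rewrite -EFinD lee_fin le_eqVlt; apply/orP; left; apply/eqP; ring.
Qed.
End WinLoseDeviation.

Section NondecreasingIntegral.
Variable R : realType.
Local Notation mu := (@lebesgue_measure R).

Lemma integral_itvoc_cst (s u c : R) : s <= u ->
  (\int[mu]_(z in `]s, u]) c%:E = ((u - s) * c)%:E)%E.
Proof.
move=> su; rewrite integral_cst //.
set L := (X in (_ * X)%E); have -> : L = (u - s)%:E.
  apply: eq_trans (lebesgue_measure_itv `]s, u]) _; rewrite /= lte_fin.
  case: ltP => [_|us]; first by rewrite EFinB.
  by rewrite (_ : u = s) ?subrr //; apply/eqP; rewrite eq_le su us.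
by rewrite -EFinM mulrC.
Qed.

Variable G : R -> R.
Hypotheses (G_nd : {homo G : y z / y <= z}) (G_ge0 : forall z, 0 <= G z).

Let mG : measurable_fun setT (EFin \o G).
Proof. by apply/measurable_EFinP; exact: nondecreasing_measurable. Qed.

Let G_ge0E z : (0 <= (G z)%:E)%E.
Proof. by rewrite lee_fin. Qed.

Lemma integral_itvcc_split (a s u : R) : a <= s -> s <= u ->
  (\int[mu]_(z in `[a, u]) (G z)%:E =
   \int[mu]_(z in `[a, s]) (G z)%:E + \int[mu]_(z in `]s, u]) (G z)%:E)%E.
Proof.
move=> a_s su; rewrite (@itv_bndbnd_setU _ _ _ (BRight s)) ?bnd_simp //.
rewrite ge0_integral_setU //; first exact: measurable_funS mG.
apply/disj_setPS => z [] /=; rewrite !in_itv /= => /andP[_ zs] /andP[sz _].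
by move: (lt_le_trans sz zs); rewrite ltxx.
Qed.

Lemma integral_itvoc_nondecreasing_ge (s u : R) : s <= u ->
  (((u - s) * G s)%:E <= \int[mu]_(z in `]s, u]) (G z)%:E)%E.
Proof.
move=> su; rewrite -integral_itvoc_cst //.
apply: ge0_le_integral => //; first exact: measurable_funS mG.
by move=> z; rewrite /= in_itv /= => /andP[sz _]; rewrite lee_fin G_nd // ltW.
Qed.

Lemma integral_itvoc_nondecreasing_le (s u : R) : s <= u ->
  (\int[mu]_(z in `]s, u]) (G z)%:E <= ((u - s) * G u)%:E)%E.
Proof.
move=> su; rewrite -integral_itvoc_cst //.
apply: ge0_le_integral => //; first exact: measurable_funS mG.
by move=> z; rewrite /= in_itv /= => /andP[_ zu]; rewrite lee_fin G_nd.
Qed.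

(* The integral of a nondecreasing function is convex, and [G s] is a
   subgradient of it at [s]. *)
Lemma integral_itvcc_nondecreasing_tangent (a s u : R) : a <= s -> a <= u ->
  (\int[mu]_(z in `[a, s]) (G z)%:E + ((u - s) * G s)%:E <=
   \int[mu]_(z in `[a, u]) (G z)%:E)%E.
Proof.
move=> a_s a_u; case: (leP s u) => [su|us].
  by rewrite (integral_itvcc_split a_s su) leeD2l // integral_itvoc_nondecreasing_ge.
rewrite (integral_itvcc_split a_u (ltW us)) -addeA geeDl //.
apply: le_trans (leeD (integral_itvoc_nondecreasing_le (ltW us)) (lexx _)) _.
by rewrite -EFinD -mulrDl addrC subrKA subrr mul0r.
Qed.
End NondecreasingIntegral.

Section ThetaExtension.
Variables (R : realType) (a b : R) (hab : a <= b) (H : Theta hab -> R).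
Hypotheses (H_nd : forall th th' : Theta hab, sval th <= sval th' -> H th <= H th')
  (H_ge0 : forall th, 0 <= H th).

Let clamp (z : R) := Num.min (Num.max z a) b.

Let clamp_in z : a <= clamp z <= b.
Proof.
rewrite /clamp; apply/andP; split; last by rewrite ge_min lexx orbT.
by rewrite le_min hab le_max lexx orbT.
Qed.

Let clamp_id z : a <= z <= b -> clamp z = z.
Proof. by move=> /andP[az zb]; rewrite /clamp (max_idPl az) (min_idPl zb). Qed.

Let sval_insubd z : a <= z <= b -> sval (insubd (theta_lo hab) z) = z.
Proof. by move=> zab; rewrite val_insubd /= zab. Qed.

(* [insubd] sends points outside [a, b] to [a]; clamping first makes the
   extension of [H] to the real line nondecreasing. *)
Let G z := H (insubd (theta_lo hab) (clamp z)).

Let G_nd : {homo G : y z / y <= z}.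
Proof.
move=> y z yz; apply: H_nd; rewrite !sval_insubd ?clamp_in //.
by apply: le_min2 => //; exact: le_max2.
Qed.

Let G_sval th : G (sval th) = H th.
Proof.
have thab := svalP th; rewrite /G clamp_id //.
by congr H; apply: val_inj; rewrite /= sval_insubd.
Qed.

Let integral_G (s : R) : s <= b ->
  (\int[lebesgue_measure]_(z in `[a, s]) (H (insubd (theta_lo hab) z))%:E =
   \int[lebesgue_measure]_(z in `[a, s]) (G z)%:E)%E.
Proof.
move=> sb; apply: eq_integral => z; rewrite inE /= in_itv /= => /andP[az zs].
by rewrite /G clamp_id // az (le_trans zs sb).
Qed.

Lemma integral_Theta_nondecreasing_tangent (th thh : Theta hab) :
  (\int[lebesgue_measure]_(z in `[a, sval thh]) (H (insubd (theta_lo hab) z))%:E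
     + ((sval th - sval thh) * H thh)%:E <=
   \int[lebesgue_measure]_(z in `[a, sval th]) (H (insubd (theta_lo hab) z))%:E)%E.
Proof.
have /andP[a_thh thh_b] := svalP thh; have /andP[a_th th_b] := svalP th.
rewrite !integral_G // -G_sval.
by apply: integral_itvcc_nondecreasing_tangent => // z; rewrite /G H_ge0.
Qed.
End ThetaExtension.

Section Allocation.
Variables (R : realType) (a b : R) (hab : a <= b).

Lemma measurable_fun_section (f : 'I_2 -> Theta hab -> Theta hab -> R) :
  bounded_measurable f -> forall i th,
  measurable_fun setT (f i th : ThetaB hab -> R).
Proof.
move=> [_ mf] i th.
exact: measurableT_comp (mf i) (@pair1_measurable _ _ (ThetaB hab) (ThetaB hab) th).
Qed.

Lemma allocation_ge0 (x : 'I_2 -> Theta hab -> Theta hab -> R) :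
  allocation_rule x -> forall i th th', 0 <= x i th th'.
Proof.
move=> [_ x_alloc] [[|[|//]] i2] th th'.
  by rewrite (_ : Ordinal i2 = ord0); [case: (x_alloc th th') | exact: val_inj].
by rewrite (_ : Ordinal i2 = lift ord0 ord0); [case: (x_alloc th' th) | exact: val_inj].
Qed.
End Allocation.

Theorem proposition1 (R : realType) (a b : R) (ha : 0 < a) (hab : a < b)
  (D : set (set (Theta (ltW hab))) -> (set (Theta (ltW hab)) -> \bar R) ->
       (set (Theta (ltW hab)) -> \bar R) -> \bar R)
  (P : set (Theta (ltW hab)) -> \bar R) (eta : R)
  (x t : 'I_2 -> Theta (ltW hab) -> Theta (ltW hab) -> R) :
  divergence_wd D -> assumptionD D ->
  isProbOn (@BorelT R a b (ltW hab)) P -> atomless P -> 0 < eta ->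
  allocation_rule x -> assumptionX D P eta x ->
  transfer_rule t -> win_lose_dependent x t ->
  (forall i th, Umin D P eta x t i th =
     (\int[lebesgue_measure]_(z in `[a, sval th])
        Xmin D P eta x i (insubd (theta_lo (ltW hab)) z))%E) ->
  feasible D P eta x t.
Proof.
move=> _ _ _ _ _ x_alloc [_ _ Xmin_nd] _ [tw [tl [tE tw_tl]]] Umin_int.
have x_ge0 := allocation_ge0 x_alloc.
have [[M x_bounded] _] := x_alloc.1; have mx := measurable_fun_section x_alloc.1.
split=> [i th thh|i th]; last first.
  by rewrite Umin_int; apply: integral_ge0 => z _; exact: worst_ge0 (x_ge0 i _).
have [amb0|/set0P amb_n0] := eqVneq (ambiguity D P eta) set0.
  by rewrite /Uhat /worst amb0 !image_set0 ereal_inf0.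
pose H y := fine (Xmin D P eta x i y).
have XminE y : Xmin D P eta x i y = (H y)%:E.
  by rewrite fineK // (worst_fin_num (mx i y) (x_bounded i y) amb_n0 (x_ge0 i y)).
have UminE y : Umin D P eta x t i y =
    (\int[lebesgue_measure]_(z in `[a, sval y])
       (H (insubd (theta_lo (ltW hab)) z))%:E)%E.
  by rewrite Umin_int; apply: eq_integral => z _; exact: XminE.
apply: le_trans
  (Uhat_le_Umin_tangent tE tw_tl th (mx i thh) (x_bounded i thh) (XminE thh)) _.
rewrite -/(Umin D P eta x t i th) !UminE.
apply: integral_Theta_nondecreasing_tangent => [y z yz|y].
  by rewrite -lee_fin -!XminE; exact: Xmin_nd.
by rewrite -lee_fin -XminE; exact: worst_ge0 (x_ge0 i y).
Qed.
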